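(* Let $0<\alpha<1$, $\lambda\ge 0$, $v>0$, $D>0$, $T>0$, $L>0$, integers $n\ge 1$, $K\ge 2$, grading exponent $r\ge 1$, and let $h=L/K$, $x_i=ih$, $t_j=(j/n)^rT$, $\tau_j=t_{j+1}-t_j$. Consider the implicit scheme: for $i=1,\ldots,K-1$, $l=1,\ldots,n$, $$\frac{1}{\Gamma(2-\alpha)}\sum_{j=0}^{l-1} \tau_{j}^{-\alpha}a_{j,l}\left(Y_i^{j+1}-Y_i^{j}\right)=-v \frac{Y_{i+1}^l-Y_{i-1}^l}{2h}+D\frac{Y_{i+1}^l-2Y_{i}^l+Y_{i-1}^l}{h^2}+e^{\lambda t_l}f_i^l,$$ with $Y_0^l=Y_K^l=0$ for $l=1,\ldots,n$ and initial values $Y_i^0=g(x_i)$, $i=1,\ldots,K-1$, where $$a_{j,k}=\left( \frac{k^r-j^r}{(j+1)^r-j^r}\right)^{1-\alpha}-\left(\frac{k^r-(j+1)^r}{(j+1)^r-j^r}\right)^{1-\alpha}.$$ If $h<\frac{2D}{v}$, then the scheme is stable in the following sense: if $(Y_i^l)$ and $(\tilde Y_i^l)$ are the solutions of the scheme corresponding to initial data $g$ and $\tilde g$ respectively (with the same $f_i^l$), and $\epsilon_i^l=Y_i^l-\tilde Y_i^l$, $\|E^l\|_\infty=\max_{1\le i\le K-1}|\epsilon_i^l|$, then $\|E^l\|_\infty\le \|E^0\|_\infty$ for all $l=1,\ldots,n$.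
   Context: The scheme approximates the solution $y$ of $D_t^{\alpha}y=-v\,\partial_x y+D\,\partial_x^2 y+e^{\lambda t}f(x,t)$ on $(0,L)\times(0,T]$, $y(x,0)=g(x)$, $y(0,t)=y(L,t)=0$, where $D_t^\alpha$ is the Caputo derivative $D_t^\alpha y(t)=\frac{1}{\Gamma(1-\alpha)}\int_0^t (t-s)^{-\alpha}y'(s)\,ds$; here $f_i^l=f(x_i,t_l)$ and $f,g$ are continuous. The function $u=e^{-\lambda t}y$ then solves the tempered problem $\mathbb{D}_t^{\alpha,\lambda}u=-v\partial_xu+D\partial_x^2u+f$ with tempered Caputo derivative $\mathbb{D}_t^{\alpha,\lambda}u=e^{-\lambda t}D_t^\alpha(e^{\lambda t}u)$. *)

From Stdlib Require Import Reals Lra Lia List.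
From Coquelicot Require Import Coquelicot.
Open Scope R_scope.

(* Real power x^y for x >= 0 with the convention 0^y = 0 (used for y > 0). *)
Definition powr (x y : R) : R := if Rle_dec x 0 then 0 else Rpower x y.

Definition Gamma (s : R) : R :=
  RInt_gen (fun t => Rpower t (s - 1) * exp (- t)) (at_right 0) (Rbar_locally p_infty).

(* finite sum over j = m, ..., m+k-1 *)
Definition sumR (m k : nat) (F : nat -> R) : R :=
  fold_right Rplus 0 (map F (seq m k)).

Definition tgrid (T r : R) (n j : nat) : R := powr (INR j / INR n) r * T.
Definition tau (T r : R) (n j : nat) : R := tgrid T r n (S j) - tgrid T r n j.

Definition acoef (alpha r : R) (j k : nat) : R :=
  let d := powr (INR (S j)) r - powr (INR j) r in
  powr ((powr (INR k) r - powr (INR j) r) / d) (1 - alpha)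
  - powr ((powr (INR k) r - powr (INR (S j)) r) / d) (1 - alpha).

(* Y : time index l -> space index i -> value Y_i^l.
   The scheme with data f (f_i^l = f x_i t_l) and initial datum g. *)
Definition is_scheme_solution (alpha lambda v D T L r : R) (n K : nat)
  (f : R -> R -> R) (g : R -> R) (Y : nat -> nat -> R) : Prop :=
  let h := L / INR K in
  (forall l, (1 <= l <= n)%nat -> Y l 0%nat = 0 /\ Y l K = 0) /\
  (forall i, (1 <= i <= K - 1)%nat -> Y 0%nat i = g (INR i * h)) /\
  (forall l i, (1 <= l <= n)%nat -> (1 <= i <= K - 1)%nat ->
     / Gamma (2 - alpha) *
       sumR 0 l (fun j => Rpower (tau T r n j) (- alpha) * acoef alpha r j l
                            * (Y (S j) i - Y j i))
     = - v * (Y l (S i) - Y l (i - 1)%nat) / (2 * h)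
       + D * (Y l (S i) - 2 * Y l i + Y l (i - 1)%nat) / (h ^ 2)
       + exp (lambda * tgrid T r n l) * f (INR i * h) (tgrid T r n l)).

Definition supnorm (K : nat) (E : nat -> R) : R :=
  fold_right Rmax 0 (map (fun i => Rabs (E i)) (seq 1 (K - 1))).

From Stdlib Require Import Reals Lra Lia List Classical.
From Coquelicot Require Import Coquelicot.
Open Scope R_scope.

(* The difference [eps = Y - Yt] solves the scheme with zero source and zero boundary values.
   The weights [tau_j ^ (-alpha) * a_(j,l)] are, up to a constant, secant slopes of the concave map
   [x |-> x ^ (1 - alpha)] over the intervals [[l^r - (j+1)^r, l^r - j^r]], hence positive and
   nondecreasing in [j]. At a spatial maximizer of [|eps^l|], Abel summation bounds the time term
   below by a positive multiple of [|eps^l| - max_(j<l) ||eps^j||], while for [h < 2 D / v] the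
   spatial term is a nonnegative combination of differences with neighbours of smaller modulus and
   so has the opposite sign. Induction on [l] gives [||eps^l|| <= ||eps^0||]. *)

Lemma powr_Rpower x e : 0 < x -> powr x e = Rpower x e.
Proof. intro Hx. unfold powr. destruct (Rle_dec x 0); [lra | reflexivity]. Qed.

Lemma powr_0_l e : powr 0 e = 0.
Proof. unfold powr. destruct (Rle_dec 0 0); [reflexivity | lra]. Qed.

Lemma Rpower_pos x e : 0 < Rpower x e.
Proof. apply exp_pos. Qed.

Lemma Rpower_Rinv_l x e : 0 < x -> Rpower (/ x) e = / Rpower x e.
Proof.
  intro Hx. unfold Rpower. rewrite ln_Rinv, <- exp_Ropp by exact Hx.
  f_equal. ring.
Qed.

Lemma powr_div x d e : 0 <= x -> 0 < d -> powr (x / d) e = powr x e / Rpower d e.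
Proof.
  intros [Hx | <-] Hd.
  - assert (Hxd : 0 < x / d) by (apply Rdiv_lt_0_compat; assumption).
    rewrite !powr_Rpower by assumption. unfold Rdiv.
    rewrite <- Rpower_mult_distr, Rpower_Rinv_l by (try apply Rinv_0_lt_compat; assumption).
    reflexivity.
  - unfold Rdiv. rewrite Rmult_0_l, powr_0_l. ring.
Qed.

Lemma exp_le_compat x y : x <= y -> exp x <= exp y.
Proof. intros [Hxy | ->]; [left; apply exp_increasing; exact Hxy | right; reflexivity]. Qed.

Lemma Rpower_le_antitone_base x y e : e <= 0 -> 0 < x <= y -> Rpower y e <= Rpower x e.
Proof.
  intros He Hxy. unfold Rpower. apply exp_le_compat.
  assert (ln x <= ln y) by (apply ln_le; lra). nra.
Qed.

Lemma powr_lt_compat x y e : 0 < e -> 0 <= x < y -> powr x e < powr y e.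
Proof.
  intros He [[Hx | <-] Hxy].
  - rewrite !powr_Rpower by lra. apply Rlt_Rpower_l; lra.
  - rewrite powr_0_l, powr_Rpower by lra. apply Rpower_pos.
Qed.

Definition secant (f : R -> R) (x y : R) : R := (f y - f x) / (y - x).

Section PowrConcave.
Variable beta : R.
Hypothesis beta_range : 0 < beta <= 1.

Let psi x := powr x beta.

Lemma powr_secant_mvt x y : 0 < x < y ->
  exists c, x < c < y /\ secant psi x y = beta * Rpower c (beta - 1).
Proof.
  intro Hxy. unfold secant, psi. rewrite !powr_Rpower by lra.
  destruct (MVT_cor2 (fun t => Rpower t beta) (fun t => beta * Rpower t (beta - 1)) x y)
    as [c [Hc Hcxy]]; [lra | intros c Hc; apply derivable_pt_lim_power; lra |].
  exists c. split; [exact Hcxy |]. rewrite Hc. field. lra.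
Qed.

Lemma powr_secant_le_left x y : 0 < x < y -> secant psi x y <= beta * Rpower x (beta - 1).
Proof.
  intro Hxy. destruct (powr_secant_mvt x y Hxy) as [c [Hc ->]].
  apply Rmult_le_compat_l; [lra |]. apply Rpower_le_antitone_base; lra.
Qed.

Lemma powr_secant_ge_right x y : 0 <= x < y -> beta * Rpower y (beta - 1) <= secant psi x y.
Proof.
  intros [[Hx | <-] Hxy].
  - destruct (powr_secant_mvt x y (conj Hx Hxy)) as [c [Hc ->]].
    apply Rmult_le_compat_l; [lra |]. apply Rpower_le_antitone_base; lra.
  - unfold secant, psi. rewrite powr_0_l, powr_Rpower, !Rminus_0_r by lra.
    replace (Rpower y beta / y) with (Rpower y (beta - 1)).
    + pose proof (Rpower_pos y (beta - 1)). nra.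
    + replace (beta - 1) with (beta + - (1)) by ring.
      rewrite Rpower_plus, Rpower_Ropp, Rpower_1 by lra. reflexivity.
Qed.

Lemma powr_secant_antitone x y z : 0 <= x < y -> y < z -> secant psi y z <= secant psi x y.
Proof.
  intros Hxy Hyz.
  apply Rle_trans with (beta * Rpower y (beta - 1)).
  - apply powr_secant_le_left; lra.
  - apply powr_secant_ge_right; lra.
Qed.

Lemma powr_secant_pos x y : 0 <= x < y -> 0 < secant psi x y.
Proof.
  intro Hxy. unfold secant, psi. apply Rdiv_lt_0_compat; [| lra].
  pose proof (powr_lt_compat x y beta ltac:(lra) Hxy). lra.
Qed.

End PowrConcave.

Definition caputo_weight (alpha T r : R) (n l j : nat) : R :=
  Rpower (tau T r n j) (- alpha) * acoef alpha r j l.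

Section GradedMesh.
Variables (alpha T r : R) (n : nat).
Hypotheses (alpha_range : 0 <= alpha < 1) (T_pos : 0 < T) (r_pos : 0 < r) (n_pos : (1 <= n)%nat).

Let P k := powr (INR k) r.
Let C := T / Rpower (INR n) r.
Let psi x := powr x (1 - alpha).

Lemma powr_INR_lt j k : (j < k)%nat -> P j < P k.
Proof.
  intro Hjk. apply powr_lt_compat; [exact r_pos |]. split.
  - apply pos_INR.
  - apply lt_INR. exact Hjk.
Qed.

Lemma powr_INR_le j k : (j <= k)%nat -> P j <= P k.
Proof.
  intro Hjk. destruct (Nat.eq_dec j k) as [-> | Hne]; [lra |].
  left. apply powr_INR_lt. lia.
Qed.

Lemma tgrid_eq j : tgrid T r n j = C * P j.
Proof.
  assert (Hn : 0 < INR n) by (apply lt_0_INR; lia).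
  unfold tgrid, C, P. destruct j as [| j].
  - simpl INR. unfold Rdiv at 1. rewrite Rmult_0_l, !powr_0_l. ring.
  - rewrite powr_div by (apply pos_INR || exact Hn).
    field. apply Rgt_not_eq, Rpower_pos.
Qed.

Lemma caputo_weight_secant l j : (j < l)%nat ->
  caputo_weight alpha T r n l j = Rpower C (- alpha) * secant psi (P l - P (S j)) (P l - P j).
Proof.
  intro Hjl.
  assert (Hd : 0 < P (S j) - P j) by (pose proof (powr_INR_lt j (S j) ltac:(lia)); lra).
  assert (HC : 0 < C) by (apply Rdiv_lt_0_compat; [exact T_pos | apply Rpower_pos]).
  assert (Hl : P (S j) <= P l) by (apply powr_INR_le; lia).
  unfold caputo_weight, tau, acoef, secant, psi. rewrite !tgrid_eq. fold (P j) (P (S j)) (P l).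
  replace (C * P (S j) - C * P j) with (C * (P (S j) - P j)) by ring.
  rewrite <- Rpower_mult_distr, !powr_div by lra.
  replace (- alpha) with ((1 - alpha) + - (1)) at 2 by ring.
  rewrite Rpower_plus, (Rpower_Ropp _ 1), Rpower_1 by lra.
  replace (P l - P j - (P l - P (S j))) with (P (S j) - P j) by ring.
  field. split; [lra | apply Rgt_not_eq, Rpower_pos].
Qed.

Lemma caputo_weight_pos l j : (j < l)%nat -> 0 < caputo_weight alpha T r n l j.
Proof.
  intro Hjl. rewrite caputo_weight_secant by exact Hjl.
  apply Rmult_lt_0_compat; [apply Rpower_pos |].
  apply powr_secant_pos; [lra |].
  pose proof (powr_INR_lt j (S j) ltac:(lia)). pose proof (powr_INR_le (S j) l ltac:(lia)). lra.
Qed.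

Lemma caputo_weight_le_succ l j : (S j < l)%nat ->
  caputo_weight alpha T r n l j <= caputo_weight alpha T r n l (S j).
Proof.
  intro Hjl. rewrite !caputo_weight_secant by lia.
  apply Rmult_le_compat_l; [left; apply Rpower_pos |].
  pose proof (powr_INR_lt j (S j) ltac:(lia)). pose proof (powr_INR_lt (S j) (S (S j)) ltac:(lia)).
  pose proof (powr_INR_le (S (S j)) l ltac:(lia)).
  apply powr_secant_antitone; lra.
Qed.

End GradedMesh.

Section NonnegImproperIntegral.
Variable f : R -> R.
Hypothesis f_nonneg : forall t, 0 < t -> 0 <= f t.
Hypothesis f_integrable : forall a b, 0 < a -> 0 < b -> ex_RInt f a b.

Lemma RInt_nonneg_subinterval a a0 b0 b :
  0 < a <= a0 -> a0 <= b0 <= b -> RInt f a0 b0 <= RInt f a b.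
Proof.
  intros Ha Hb.
  rewrite <- (RInt_Chasles f a a0 b), <- (RInt_Chasles f a0 b0 b) by (apply f_integrable; lra).
  assert (0 <= RInt f a a0)
    by (apply RInt_ge_0; [lra | apply f_integrable; lra | intros; apply f_nonneg; lra]).
  assert (0 <= RInt f b0 b)
    by (apply RInt_ge_0; [lra | apply f_integrable; lra | intros; apply f_nonneg; lra]).
  unfold plus; simpl. lra.
Qed.

(* The limit is the supremum of the integrals over compact subintervals. *)
Lemma is_RInt_gen_nonneg_bounded B : (forall a b, 0 < a <= b -> RInt f a b <= B) ->
  exists l, is_RInt_gen f (at_right 0) (Rbar_locally p_infty) l /\
    forall a b, 0 < a <= b -> RInt f a b <= l.
Proof.
  intro HB.
  set (I := fun x => exists a b, 0 < a <= b /\ x = RInt f a b).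
  destruct (completeness I) as [l [Hub Hlub]].
  - exists B. intros x [a [b [Hab ->]]]. apply HB, Hab.
  - exists (RInt f 1 1), 1, 1. split; [lra | reflexivity].
  - exists l. split; [| intros a b Hab; apply Hub; exists a, b; split; [exact Hab | reflexivity]].
    intros P [eps Heps].
    destruct (classic (exists x, I x /\ l - eps < x)) as [[x [[a0 [b0 [Hab0 ->]]] Hx]] | Hnone].
    2: { exfalso.
         assert (l <= l - eps).
         { apply Hlub. intros x Ix. apply Rnot_lt_le. intro Hlt. apply Hnone. exists x. split; assumption. }
         pose proof (cond_pos eps). lra. }
    apply (Filter_prod _ _ _ (fun a => 0 < a < a0) (fun b => b0 < b)).
    + assert (Ha0 : 0 < a0) by lra. exists (mkposreal a0 Ha0). intros y Hy Hy0.
      apply Rabs_def2 in Hy. unfold minus, plus, opp in Hy; simpl in Hy. lra.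
    + exists b0. intros b Hb. exact Hb.
    + intros a b Ha Hb. exists (RInt f a b). split.
      * apply (RInt_correct (V := R_CompleteNormedModule)), f_integrable; lra.
      * apply Heps.
        assert (RInt f a0 b0 <= RInt f a b) by (apply RInt_nonneg_subinterval; lra).
        assert (RInt f a b <= l) by (apply Hub; exists a, b; split; [lra | reflexivity]).
        apply Rabs_def1; unfold minus, plus, opp; simpl; lra.
Qed.

End NonnegImproperIntegral.

Section GammaIntegrand.
Variable beta : R.
Hypothesis beta_range : 0 <= beta <= 1.

Let gamma_integrand t := Rpower t beta * exp (- t).

Lemma gamma_integrand_integrable a b : 0 < a -> 0 < b -> ex_RInt gamma_integrand a b.
Proof.
  intros Ha Hb. apply (ex_RInt_continuous (V := R_CompleteNormedModule)). intros t Ht.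
  assert (0 < Rmin a b) by (apply Rmin_glb_lt; assumption).
  apply (ex_derive_continuous (K := R_AbsRing) (V := R_NormedModule)).
  unfold gamma_integrand, Rpower. auto_derive. lra.
Qed.

(* From [t ^ beta <= 1 + t <= 2 exp (t / 2)]. *)
Lemma gamma_integrand_bounds t : 0 < t -> 0 <= gamma_integrand t <= 2 * exp (- t / 2).
Proof.
  intro Ht. unfold gamma_integrand. split.
  - apply Rmult_le_pos; left; [apply Rpower_pos | apply exp_pos].
  - assert (Hpow : Rpower t beta <= 1 + t).
    { unfold Rpower. destruct (Rle_dec t 1) as [Ht1 | Ht1].
      - assert (ln t <= 0) by (rewrite <- ln_1; apply ln_le; lra).
        assert (exp (beta * ln t) <= exp 0) by (apply exp_le_compat; nra).
        rewrite exp_0 in *. lra.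
      - assert (0 <= ln t) by (rewrite <- ln_1; apply ln_le; lra).
        assert (exp (beta * ln t) <= exp (ln t)) by (apply exp_le_compat; nra).
        rewrite exp_ln in *; lra. }
    assert (Hexp : 1 + t <= 2 * exp (t / 2)) by (pose proof (exp_ineq1_le (t / 2)); lra).
    replace (exp (- t / 2)) with (exp (t / 2) * exp (- t)) by (rewrite <- exp_plus; f_equal; field).
    pose proof (exp_pos (- t)). nra.
Qed.

Lemma RInt_exp_half a b :
  RInt (fun t => 2 * exp (- t / 2)) a b = 4 * exp (- a / 2) - 4 * exp (- b / 2).
Proof.
  apply is_RInt_unique.
  replace (4 * exp (- a / 2) - 4 * exp (- b / 2))
    with (minus (-4 * exp (- b / 2)) (-4 * exp (- a / 2)))
    by (unfold minus, plus, opp; simpl; ring).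
  apply (is_RInt_derive (V := R_CompleteNormedModule) (fun t => -4 * exp (- t / 2))).
  - intros t _. auto_derive; [exact I | simpl; unfold Rdiv; lra].
  - intros t _. apply (ex_derive_continuous (K := R_AbsRing) (V := R_NormedModule)).
    auto_derive. exact I.
Qed.

Lemma RInt_gamma_integrand_le a b : 0 < a <= b -> RInt gamma_integrand a b <= 4.
Proof.
  intro Hab.
  apply Rle_trans with (RInt (fun t => 2 * exp (- t / 2)) a b).
  - apply RInt_le; [lra | apply gamma_integrand_integrable; lra | |].
    + apply (ex_RInt_continuous (V := R_CompleteNormedModule)). intros t _.
      apply (ex_derive_continuous (K := R_AbsRing) (V := R_NormedModule)). auto_derive. exact I.
    + intros t Ht. apply gamma_integrand_bounds. lra.
  - rewrite RInt_exp_half. pose proof (exp_pos (- b / 2)).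
    assert (exp (- a / 2) <= exp 0) by (apply exp_le_compat; lra).
    rewrite exp_0 in *. lra.
Qed.

Lemma RInt_gamma_integrand_1_2 : exp (-2) <= RInt gamma_integrand 1 2.
Proof.
  replace (exp (-2)) with (RInt (fun _ => exp (-2)) 1 2)
    by (rewrite RInt_const; unfold scal; simpl; unfold mult; simpl; ring).
  apply RInt_le; [lra | apply ex_RInt_const | apply gamma_integrand_integrable; lra |].
  intros t Ht. unfold gamma_integrand, Rpower.
  assert (0 <= ln t) by (rewrite <- ln_1; apply ln_le; lra).
  assert (exp 0 <= exp (beta * ln t)) by (apply exp_le_compat; nra).
  assert (exp (-2) <= exp (- t)) by (apply exp_le_compat; lra).
  rewrite exp_0 in *. pose proof (exp_pos (-2)). nra.
Qed.

End GammaIntegrand.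

Lemma Gamma_pos s : 1 <= s <= 2 -> 0 < Gamma s.
Proof.
  intro Hs. assert (Hbeta : 0 <= s - 1 <= 1) by lra.
  destruct (is_RInt_gen_nonneg_bounded (fun t => Rpower t (s - 1) * exp (- t))
    (fun t Ht => proj1 (gamma_integrand_bounds (s - 1) Hbeta t Ht))
    (gamma_integrand_integrable (s - 1)) 4
    (RInt_gamma_integrand_le (s - 1) Hbeta)) as [l [Hl Hsup]].
  unfold Gamma. rewrite (is_RInt_gen_unique _ l Hl).
  pose proof (Hsup 1 2 ltac:(lra)). pose proof (RInt_gamma_integrand_1_2 (s - 1) Hbeta).
  pose proof (exp_pos (-2)). lra.
Qed.

Lemma sumR_succ m k F : sumR m (S k) F = sumR m k F + F (m + k)%nat.
Proof.
  unfold sumR. rewrite seq_S, map_app, fold_right_app. simpl.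
  induction (map F (seq m k)) as [| x xs IH]; simpl; [ring | rewrite IH; ring].
Qed.

Definition incr_sum (b : nat -> R) (l : nat) (w : nat -> R) : R :=
  sumR 0 l (fun j => b j * (w (S j) - w j)).

Lemma incr_sum_0 b w : incr_sum b 0 w = 0.
Proof. reflexivity. Qed.

Lemma incr_sum_succ b k w : incr_sum b (S k) w = incr_sum b k w + b k * (w (S k) - w k).
Proof. apply sumR_succ. Qed.

Lemma incr_sum_minus b l x y :
  incr_sum b l (fun j => x j - y j) = incr_sum b l x - incr_sum b l y.
Proof.
  induction l as [| k IH]; [rewrite !incr_sum_0; ring |].
  rewrite !incr_sum_succ, IH. ring.
Qed.

Lemma incr_sum_opp b l w : incr_sum b l (fun j => - w j) = - incr_sum b l w.
Proof.
  induction l as [| k IH]; [rewrite !incr_sum_0; ring |].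
  rewrite !incr_sum_succ, IH. ring.
Qed.

(* Abel summation: with nondecreasing weights the sum is smallest when every earlier value sits at the bound. *)
Lemma incr_sum_lower_bound b w N k :
  0 <= b 0%nat -> (forall j, (j < k)%nat -> b j <= b (S j)) ->
  (forall j, (j <= k)%nat -> w j <= N) ->
  b k * (w (S k) - N) <= incr_sum b (S k) w.
Proof.
  revert w. induction k as [| k IH]; intros w Hb0 Hb Hw; rewrite incr_sum_succ.
  - rewrite incr_sum_0. pose proof (Hw 0%nat (le_n _)). nra.
  - assert (IHk : b k * (w (S k) - N) <= incr_sum b (S k) w)
      by (apply IH; [exact Hb0 | intros; apply Hb; lia | intros; apply Hw; lia]).
    pose proof (Hb k (Nat.lt_succ_diag_r _)). pose proof (Hw (S k) (le_n _)).
    assert (0 <= (b (S k) - b k) * (N - w (S k))) by (apply Rmult_le_pos; lra).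
    lra.
Qed.

Section MaximumPrinciple.
Variables (b : nat -> R) (k : nat) (mu cp cm N : R).
Hypotheses (b0_nonneg : 0 <= b 0%nat) (b_mono : forall j, (j < k)%nat -> b j <= b (S j))
  (bk_pos : 0 < b k) (mu_pos : 0 < mu) (cp_nonneg : 0 <= cp) (cm_nonneg : 0 <= cm).

Lemma incr_sum_max_principle_nonneg w p q :
  (forall j, (j <= k)%nat -> w j <= N) -> p <= w (S k) -> q <= w (S k) ->
  mu * incr_sum b (S k) w = cp * (p - w (S k)) + cm * (q - w (S k)) ->
  w (S k) <= N.
Proof.
  intros Hw Hp Hq Heq.
  pose proof (incr_sum_lower_bound b w N k b0_nonneg b_mono Hw) as Hlow.
  apply Rnot_lt_le. intro HN.
  assert (0 < mu * (b k * (w (S k) - N))) by (apply Rmult_lt_0_compat; [| apply Rmult_lt_0_compat]; lra).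
  assert (mu * (b k * (w (S k) - N)) <= mu * incr_sum b (S k) w) by (apply Rmult_le_compat_l; lra).
  assert (cp * (p - w (S k)) <= 0) by (apply Rmult_le_0_l; lra).
  assert (cm * (q - w (S k)) <= 0) by (apply Rmult_le_0_l; lra).
  lra.
Qed.

Lemma incr_sum_max_principle w p q :
  (forall j, (j <= k)%nat -> Rabs (w j) <= N) ->
  Rabs p <= Rabs (w (S k)) -> Rabs q <= Rabs (w (S k)) ->
  mu * incr_sum b (S k) w = cp * (p - w (S k)) + cm * (q - w (S k)) ->
  Rabs (w (S k)) <= N.
Proof.
  intros Hw Hp Hq Heq. pose proof (Rle_abs p). pose proof (Rle_abs q).
  pose proof (Rabs_maj2 p). pose proof (Rabs_maj2 q).
  destruct (Rle_lt_dec 0 (w (S k))) as [Hpos | Hneg].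
  - rewrite (Rabs_right (w (S k))) in Hp, Hq |- * by lra.
    apply (incr_sum_max_principle_nonneg w p q); try lra.
    intros j Hj. pose proof (Rle_abs (w j)). pose proof (Hw j Hj). lra.
  - rewrite (Rabs_left (w (S k))) in Hp, Hq |- * by lra.
    apply (incr_sum_max_principle_nonneg (fun j => - w j) (- p) (- q)); try lra.
    + intros j Hj. pose proof (Rabs_maj2 (w j)). pose proof (Hw j Hj). lra.
    + rewrite incr_sum_opp. lra.
Qed.

End MaximumPrinciple.

Lemma fold_Rmax_nonneg xs : 0 <= fold_right Rmax 0 xs.
Proof. induction xs as [| x xs IH]; simpl; [lra | eapply Rle_trans; [exact IH | apply Rmax_r]]. Qed.

Lemma fold_Rmax_ge x xs : In x xs -> x <= fold_right Rmax 0 xs.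
Proof.
  induction xs as [| y xs IH]; simpl; intros Hx; [contradiction |].
  destruct Hx as [<- | Hx]; [apply Rmax_l | eapply Rle_trans; [apply IH, Hx | apply Rmax_r]].
Qed.

Lemma fold_Rmax_attained xs : fold_right Rmax 0 xs = 0 \/ In (fold_right Rmax 0 xs) xs.
Proof.
  induction xs as [| x xs IH]; simpl; [left; reflexivity |].
  destruct (Rle_dec x (fold_right Rmax 0 xs)).
  - rewrite Rmax_right by assumption. tauto.
  - rewrite Rmax_left by lra. tauto.
Qed.

Lemma supnorm_nonneg K E : 0 <= supnorm K E.
Proof. apply fold_Rmax_nonneg. Qed.

Lemma supnorm_ge K E i : (1 <= i <= K - 1)%nat -> Rabs (E i) <= supnorm K E.
Proof. intro Hi. apply fold_Rmax_ge, (in_map (fun i => Rabs (E i))), in_seq. lia. Qed.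

Lemma supnorm_ge_boundary K E i : E 0%nat = 0 -> E K = 0 -> (i <= K)%nat ->
  Rabs (E i) <= supnorm K E.
Proof.
  intros H0 HK Hi.
  destruct (Nat.eq_dec i 0) as [-> | Hi0]; [rewrite H0, Rabs_R0; apply supnorm_nonneg |].
  destruct (Nat.eq_dec i K) as [-> | HiK]; [rewrite HK, Rabs_R0; apply supnorm_nonneg |].
  apply supnorm_ge. lia.
Qed.

Lemma supnorm_le_maximizers K E N : 0 <= N ->
  (forall i, (1 <= i <= K - 1)%nat -> supnorm K E = Rabs (E i) -> Rabs (E i) <= N) ->
  supnorm K E <= N.
Proof.
  intros HN HE.
  destruct (fold_Rmax_attained (map (fun i => Rabs (E i)) (seq 1 (K - 1)))) as [H0 | Hin].
  - unfold supnorm. rewrite H0. exact HN.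
  - apply in_map_iff in Hin. destruct Hin as [i [Hi Hseq]]. apply in_seq in Hseq.
    unfold supnorm. rewrite <- Hi. apply HE; [lia | symmetry; exact Hi].
Qed.

(* At a maximizer of [|eps (S k) i|] both neighbours are no larger, the boundary values being zero. *)
Lemma level_max_principle (b : nat -> R) (eps : nat -> nat -> R) K k mu cp cm N :
  0 <= b 0%nat -> (forall j, (j < k)%nat -> b j <= b (S j)) -> 0 < b k ->
  0 < mu -> 0 <= cp -> 0 <= cm -> 0 <= N ->
  eps (S k) 0%nat = 0 -> eps (S k) K = 0 ->
  (forall j i, (j <= k)%nat -> (1 <= i <= K - 1)%nat -> Rabs (eps j i) <= N) ->
  (forall i, (1 <= i <= K - 1)%nat ->
     mu * incr_sum b (S k) (fun j => eps j i)
     = cp * (eps (S k) (S i) - eps (S k) i) + cm * (eps (S k) (i - 1)%nat - eps (S k) i)) ->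
  supnorm K (eps (S k)) <= N.
Proof.
  intros Hb0 Hb Hbk Hmu Hcp Hcm HN Hleft Hright Hprev Hscheme.
  apply supnorm_le_maximizers; [exact HN |]. intros i Hi Hmax.
  apply (incr_sum_max_principle b k mu cp cm N Hb0 Hb Hbk Hmu Hcp Hcm
           (fun j => eps j i) (eps (S k) (S i)) (eps (S k) (i - 1)%nat)).
  - intros j Hj. apply Hprev; assumption.
  - rewrite <- Hmax. apply supnorm_ge_boundary; [exact Hleft | exact Hright | lia].
  - rewrite <- Hmax. apply supnorm_ge_boundary; [exact Hleft | exact Hright | lia].
  - apply Hscheme, Hi.
Qed.

Lemma incr_scheme_stable (b eps : nat -> nat -> R) K n mu cp cm :
  0 < mu -> 0 <= cp -> 0 <= cm ->
  (forall l j, (j < l)%nat -> 0 < b l j) ->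
  (forall l j, (S j < l)%nat -> b l j <= b l (S j)) ->
  (forall l, (1 <= l <= n)%nat -> eps l 0%nat = 0 /\ eps l K = 0) ->
  (forall l i, (1 <= l <= n)%nat -> (1 <= i <= K - 1)%nat ->
     mu * incr_sum (b l) l (fun j => eps j i)
     = cp * (eps l (S i) - eps l i) + cm * (eps l (i - 1)%nat - eps l i)) ->
  forall l, (l <= n)%nat -> supnorm K (eps l) <= supnorm K (eps 0%nat).
Proof.
  intros Hmu Hcp Hcm Hb_pos Hb_mono Hboundary Hscheme.
  induction l as [[| k] IH] using Wf_nat.lt_wf_ind; intro Hl; [apply Rle_refl |].
  destruct (Hboundary (S k) ltac:(lia)) as [Hleft Hright].
  apply (level_max_principle (b (S k)) eps K k mu cp cm); try assumption.
  - left. apply Hb_pos. lia.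
  - intros j Hj. apply Hb_mono. lia.
  - apply Hb_pos. lia.
  - apply supnorm_nonneg.
  - intros j i Hj Hi. apply Rle_trans with (supnorm K (eps j)); [apply supnorm_ge, Hi |].
    apply IH; lia.
  - intros i Hi. apply Hscheme; [lia | exact Hi].
Qed.

Lemma peclet_coeff_nonneg v D h : 0 < v -> 0 < h -> h < 2 * D / v -> 0 <= D / h ^ 2 - v / (2 * h).
Proof.
  intros Hv Hh HhD.
  apply Rmult_lt_compat_l with (r := v) in HhD; [| exact Hv].
  replace (v * (2 * D / v)) with (2 * D) in HhD by (field; lra).
  replace (D / h ^ 2 - v / (2 * h)) with ((2 * D - v * h) / (2 * h ^ 2)) by (field; lra).
  apply Rmult_le_pos; [lra | left; apply Rinv_0_lt_compat; nra].
Qed.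

Section SchemeDifference.
Variables (alpha lambda v D T L r : R) (n K : nat) (f : R -> R -> R) (g gt : R -> R)
  (Y Yt : nat -> nat -> R).
Hypotheses (L_pos : 0 < L) (K_pos : (1 <= K)%nat)
  (Y_sol : is_scheme_solution alpha lambda v D T L r n K f g Y)
  (Yt_sol : is_scheme_solution alpha lambda v D T L r n K f gt Yt).

Let h := L / INR K.

Lemma scheme_difference_boundary l : (1 <= l <= n)%nat ->
  Y l 0%nat - Yt l 0%nat = 0 /\ Y l K - Yt l K = 0.
Proof.
  intro Hl. destruct Y_sol as [HY _], Yt_sol as [HYt _].
  destruct (HY l Hl) as [-> ->], (HYt l Hl) as [-> ->]. split; ring.
Qed.

Lemma scheme_difference_equation l i : (1 <= l <= n)%nat -> (1 <= i <= K - 1)%nat ->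
  / Gamma (2 - alpha) * incr_sum (caputo_weight alpha T r n l) l (fun j => Y j i - Yt j i)
  = (D / h ^ 2 - v / (2 * h)) * ((Y l (S i) - Yt l (S i)) - (Y l i - Yt l i))
    + (D / h ^ 2 + v / (2 * h)) * ((Y l (i - 1)%nat - Yt l (i - 1)%nat) - (Y l i - Yt l i)).
Proof.
  intros Hl Hi. destruct Y_sol as [_ [_ HY]], Yt_sol as [_ [_ HYt]].
  assert (Hh : 0 < h) by (apply Rdiv_lt_0_compat; [exact L_pos | apply lt_0_INR; lia]).
  rewrite (incr_sum_minus _ _ (fun j => Y j i) (fun j => Yt j i)), Rmult_minus_distr_l.
  unfold incr_sum, caputo_weight. rewrite (HY l i Hl Hi), (HYt l i Hl Hi).
  fold h. field. lra.
Qed.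

End SchemeDifference.

Theorem mainTheorem1 (alpha lambda v D T L r : R) (n K : nat)
  (f : R -> R -> R) (g gt : R -> R) (Y Yt : nat -> nat -> R) :
  0 < alpha < 1 -> 0 <= lambda -> 0 < v -> 0 < D -> 0 < T -> 0 < L ->
  (1 <= n)%nat -> (2 <= K)%nat -> 1 <= r ->
  (forall p : R * R, 0 <= fst p <= L -> 0 <= snd p <= T ->
     filterlim (fun q : R * R => f (fst q) (snd q))
       (within (fun q : R * R => 0 <= fst q <= L /\ 0 <= snd q <= T) (locally p))
       (locally (f (fst p) (snd p)))) ->
  (forall x, 0 <= x <= L ->
     filterlim g (within (fun y => 0 <= y <= L) (locally x)) (locally (g x))) ->
  (forall x, 0 <= x <= L ->
     filterlim gt (within (fun y => 0 <= y <= L) (locally x)) (locally (gt x))) ->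
  L / INR K < 2 * D / v ->
  is_scheme_solution alpha lambda v D T L r n K f g Y ->
  is_scheme_solution alpha lambda v D T L r n K f gt Yt ->
  forall l, (1 <= l <= n)%nat ->
    supnorm K (fun i => Y l i - Yt l i) <= supnorm K (fun i => Y 0%nat i - Yt 0%nat i).
Proof.
  intros Ha _ Hv HD HT HL Hn HK Hr _ _ _ Hh HY HYt.
  set (h := L / INR K) in Hh.
  assert (Hh0 : 0 < h) by (apply Rdiv_lt_0_compat; [exact HL | apply lt_0_INR; lia]).
  intros l Hl.
  apply (incr_scheme_stable (caputo_weight alpha T r n) (fun l i => Y l i - Yt l i) K n
           (/ Gamma (2 - alpha)) (D / h ^ 2 - v / (2 * h)) (D / h ^ 2 + v / (2 * h))).
  - apply Rinv_0_lt_compat, Gamma_pos. lra.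
  - apply peclet_coeff_nonneg; assumption.
  - assert (0 <= v / (2 * h)) by (apply Rdiv_le_0_compat; lra).
    assert (0 <= D / h ^ 2) by (apply Rdiv_le_0_compat; [lra | nra]). lra.
  - apply caputo_weight_pos; lra || assumption.
  - apply caputo_weight_le_succ; lra || assumption.
  - apply (scheme_difference_boundary alpha lambda v D T L r n K f g gt Y Yt HY HYt).
  - apply (scheme_difference_equation alpha lambda v D T L r n K f g gt Y Yt HL ltac:(lia) HY HYt).
  - lia.
Qed.
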